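(* Let $n\ge 4$ and let $\mathcal M$ be an IP-SEG* model which is an IP-SEG representation of the chordless cycle $C_n$ and which contains at least one interval segment. Then $\mathcal M$ has exactly one interval arc (and hence exactly one permutation arc).
   Context: Let $L_1$ and $L_2$ be two distinct parallel horizontal lines in the plane. A closed straight line segment is an interval segment if both of its endpoints lie on the same line $L_i$, and a permutation segment if one endpoint lies on $L_1$ and the other on $L_2$. An IP-SEG model is a finite family of interval and permutation segments; its intersection graph has one vertex per segment, adjacent iff the segments intersect. An IP-SEG* model is an IP-SEG model in which all interval segments lie on the same line $L_i$. For $m\ge 3$, $C_m$ is the chordless cycle on $v_1,\dots,v_m$ with $v_i$ adjacent to $v_{i+1}$ (indices mod $m$) and no other edges. An IP-SEG representation of $C_m$ is an IP-SEG model with segments $s(v_1),\dots,s(v_m)$ whose intersection graph is $C_m$ with $s(v_i)$ corresponding to $v_i$. If such a representation contains both interval and permutation segments, an interval arc is a maximal sequence of cyclically consecutive segments $s(v_i),\dots,s(v_j)$ that are all interval segments; a permutation arc is a maximal sequence of cyclically consecutive segments that are all permutation segments. *)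

(* the plane is R^2 for an arbitrary real field R
   (this includes the real numbers; all notions are first-order). *)
From HB Require Import structures.
From mathcomp Require Import all_boot all_order all_algebra.
Set Implicit Arguments. Unset Strict Implicit. Unset Printing Implicit Defensive.
Import Order.TTheory GRing.Theory Num.Theory.
Local Open Scope ring_scope.

Section Geometry.
Variable R : realFieldType.

Definition point := (R * R)%type.
Definition segment := (point * point)%type.

Definition on_seg (x : point) (s : segment) : Prop :=
  exists t : R, 0 <= t /\ t <= 1 /\
    x.1 = (1 - t) * s.1.1 + t * s.2.1 /\
    x.2 = (1 - t) * s.1.2 + t * s.2.2.

Definition seg_meet (s1 s2 : segment) : Prop :=
  exists x : point, on_seg x s1 /\ on_seg x s2.

(* The horizontal lines are L1 = {y = a} and L2 = {y = b}. *)
Definition on_line (c : R) (p : point) : bool := p.2 == c.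

Definition interval_seg (a b : R) (s : segment) : bool :=
  (on_line a s.1 && on_line a s.2) || (on_line b s.1 && on_line b s.2).

Definition perm_seg (a b : R) (s : segment) : bool :=
  (on_line a s.1 && on_line b s.2) || (on_line b s.1 && on_line a s.2).

Definition IPSEG_model (a b : R) (n : nat) (s : nat -> segment) : Prop :=
  a != b /\ forall i, (i < n)%N -> interval_seg a b (s i) || perm_seg a b (s i).

Definition IPSEGstar_model (a b : R) (n : nat) (s : nat -> segment) : Prop :=
  IPSEG_model a b n s /\
  exists c, (c == a) || (c == b) /\
    forall i, (i < n)%N -> interval_seg a b (s i) ->
      on_line c (s i).1 && on_line c (s i).2.

(* adjacency in the chordless cycle C_n on vertices 0..n-1
   (vertex v_{i+1} of the paper is index i) *)
Definition cycle_adj (n i j : nat) : bool :=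
  (i.+1 %% n == j)%N || (j.+1 %% n == i)%N.

Definition represents_cycle (n : nat) (s : nat -> segment) : Prop :=
  forall i j, (i < n)%N -> (j < n)%N -> i != j ->
    (seg_meet (s i) (s j) <-> cycle_adj n i j).

Definition arc (P : pred segment) (n : nat) (s : nat -> segment) (i k : nat) : Prop :=
  (i < n)%N /\ (0 < k)%N /\ (k < n)%N /\
  (forall m, (m < k)%N -> P (s ((i + m) %% n)%N)) /\
  ~~ P (s ((i + n - 1) %% n)%N) /\ ~~ P (s ((i + k) %% n)%N).

Definition interval_arc (a b : R) := arc (interval_seg a b).
Definition perm_arc (a b : R) := arc (perm_seg a b).

End Geometry.

(* All interval segments lie on one line y = c and every other segment joins y = c
   to the other line y = d.  Record each segment by two abscissae: the endpoints of
   an interval, the feet on y = c and y = d of a permutation segment.  Then two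
   permutation segments meet iff their feet come in opposite orders on the two
   lines, a permutation segment meets an interval iff its foot on y = c lies in the
   interval, and two intervals meet iff they overlap.

   Not every segment is an interval: an interval graph has no chordless cycle of
   length at least 4.  Suppose there were two interval arcs; rotate so that they are
   A = [0, e1) and B = [p2, e2), with permutation segments C = [e1, p2), e2 and
   n - 1.  The consecutive segments of C all miss e2, so they lie on one side of it,
   say (up to a reflection) to its left.  Let q in C have the rightmost foot.  The
   path e2, ..., n - 1 misses q, hence stays to the right of q; so the foot of q lies
   between the feet of n - 1 and e1, and between those of p2 - 1 and e2.  Walking
   along A and along B, it is covered by an interval of each, and these two
   intervals meet although they are not adjacent in C_n.  So the intervals form a
   single cyclic arc, whose complement is the single permutation arc. *)

From HB Require Import structures.
From mathcomp Require Import all_boot all_order all_algebra.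
From mathcomp Require Import zify ring lra.
Import Order.TTheory GRing.Theory Num.Theory.
Set Implicit Arguments. Unset Strict Implicit. Unset Printing Implicit Defensive.

(* [arc Q n s] is [cyclic_run (fun j => Q (s (j %% n))) n] by conversion. *)
Definition cyclic_run (P : pred nat) (n i k : nat) : Prop :=
  i < n /\ 0 < k /\ k < n /\ (forall m, m < k -> P (i + m)) /\
  ~~ P (i + n - 1) /\ ~~ P (i + k).

Definition run_start (P : pred nat) (n i : nat) : bool := P i && ~~ P (i + n - 1).

Definition unique_cyclic_run (P : pred nat) (n : nat) : Prop :=
  exists i k, cyclic_run P n i k /\
    forall i' k', cyclic_run P n i' k' -> i' = i /\ k' = k.

Definition periodic (P : pred nat) (n : nat) : Prop := forall j, P (j %% n) = P j.

Lemma first_switch (P : pred nat) x z :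
  x <= z -> ~~ P x -> P z ->
  exists y, [/\ x < y <= z, P y & forall t, x <= t < y -> ~~ P t].
Proof.
move=> le_xz Px Pz.
have lt_xz : x < z by rewrite ltn_neqAle le_xz andbT; apply/eqP => e; rewrite e Pz in Px.
have ex_y : exists y, (x < y) && P y by exists z; rewrite lt_xz.
case: (ex_minnP ex_y) => y /andP[lt_xy Py] y_min.
exists y; split=> //; first by rewrite lt_xy y_min // lt_xz.
move=> t /andP[le_xt lt_ty]; apply: contraTN lt_ty => Pt; rewrite -leqNgt.
case: ltngtP le_xt => // [lt_xt | eq_xt] _; first by apply: y_min; rewrite lt_xt.
by rewrite eq_xt Pt in Px.
Qed.

Lemma cyclic_run_len P n i k1 k2 :
  cyclic_run P n i k1 -> cyclic_run P n i k2 -> k1 = k2.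
Proof.
move=> [_ [_ [_ [run1 [_ end1]]]]] [_ [_ [_ [run2 [_ end2]]]]].
by case: (ltngtP k1 k2) => // [/run2 | /run1]; [rewrite (negbTE end1) | rewrite (negbTE end2)].
Qed.

Lemma cyclic_run_start P n i k : cyclic_run P n i k -> run_start P n i.
Proof. by move=> [_ [k_gt0 [_ [run [Pprev _]]]]]; rewrite /run_start Pprev -(addn0 i) run. Qed.

Lemma cyclic_run_from_start P n i :
  i < n -> run_start P n i -> exists k, cyclic_run P n i k.
Proof.
move=> lt_in /andP[Pi Pprev].
have Pi0 : ~~ ~~ P (i + 0) by rewrite addn0 Pi.
have Plast : ~~ P (i + (n - 1)) by rewrite addnBA // (leq_ltn_trans (leq0n i) lt_in).
have [k [/andP[k_gt0 le_k] Pk before]] :=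
  @first_switch (fun m => ~~ P (i + m)) 0 (n - 1) (leq0n _) Pi0 Plast.
exists k; do 3 (split; first lia); split; last by [].
by move=> m lt_mk; have := before m; rewrite negbK; apply; lia.
Qed.

Lemma periodicN P n : periodic P n -> periodic (fun j => ~~ P j) n.
Proof. by move=> hP j; rewrite hP. Qed.

Lemma periodic_eq P n a b : periodic P n -> a = b %[mod n] -> P a = P b.
Proof. by move=> hP e; rewrite -hP e hP. Qed.

Section PeriodicRuns.
Variable n : nat.
Hypothesis n_gt0 : 0 < n.

Lemma addn_pred_mod y : 0 < y -> y + n - 1 = y.-1 %[mod n].
Proof. by move=> y_gt0; rewrite -(modnDr y.-1 n); congr (_ %% n); lia. Qed.

Lemma run_start_mod P y :
  periodic P n -> 0 < y -> P y -> ~~ P y.-1 -> run_start P n (y %% n).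
Proof.
move=> hP y_gt0 Py Pprev; rewrite /run_start hP Py (periodic_eq (b := y.-1) hP) //.
by rewrite -addnBA // modnDml addnBA // addn_pred_mod.
Qed.

Lemma run_start_exists P :
  periodic P n -> (exists j, P j) -> (exists j, ~~ P j) ->
  exists2 i, i < n & run_start P n i.
Proof.
move=> hP [j1 Pj1] [j0 Pj0].
have Pz : P (j1 + j0 * n) by rewrite -hP addnC modnMDl hP.
have [|y [/andP[lt_j0y _] Py before]] := first_switch _ Pj0 Pz; first by nia.
exists (y %% n); first by rewrite ltn_mod.
by apply: run_start_mod => //; [lia | apply: before; lia].
Qed.

Lemma run_starts_interleave P i i' :
  periodic P n -> i < i' < n -> run_start P n i -> run_start P n i' ->
  exists j j', [/\ j < n, j' < n, j != j' &
    run_start (fun t => ~~ P t) n j && run_start (fun t => ~~ P t) n j'].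
Proof.
move=> hP /andP[lt_ii' lt_i'n] /andP[Pi Pi_prev] /andP[Pi' Pi'_prev].
have hNP := periodicN hP.
have NNPi : ~~ ~~ P i by rewrite Pi.
have NNPi' : ~~ ~~ P i' by rewrite Pi'.
have {}Pi'_prev : ~~ P i'.-1.
  by rewrite -(periodic_eq (a := i' + n - 1) hP) // addn_pred_mod //; lia.
have [|y1 [/andP[lt_iy1 le_y1] NPy1 before1]] :=
  @first_switch (fun t => ~~ P t) i i'.-1 _ NNPi Pi'_prev; first by lia.
have [|y2 [/andP[lt_i'y2 le_y2] NPy2 before2]] :=
  @first_switch (fun t => ~~ P t) i' (i + n - 1) _ NNPi' Pi_prev; first by lia.
have start1 := run_start_mod hNP (y := y1) ltac:(lia) NPy1 (before1 y1.-1 ltac:(lia)).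
have start2 := run_start_mod hNP (y := y2) ltac:(lia) NPy2 (before2 y2.-1 ltac:(lia)).
exists (y1 %% n), (y2 %% n); rewrite !ltn_mod start1 start2 n_gt0; split=> //.
rewrite (modn_small (_ : y1 < n)); last by lia.
have [lt_y2n | le_ny2] := ltnP y2 n; first by rewrite modn_small //; lia.
by rewrite -(subnK le_ny2) modnDr modn_small; lia.
Qed.

End PeriodicRuns.

Lemma unique_cyclic_run_of_start P n :
  (exists2 i, i < n & run_start P n i) ->
  (forall i i', i < n -> i' < n -> run_start P n i -> run_start P n i' -> i = i') ->
  unique_cyclic_run P n.
Proof.
move=> [i lt_in start_i] start_uniq.
have [k run_ik] := cyclic_run_from_start lt_in start_i.
exists i, k; split=> // i' k' run'.
have ei : i' = i by apply: start_uniq (cyclic_run_start run') start_i => //; case: run'.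
by subst i'; split=> //; apply: cyclic_run_len run' run_ik.
Qed.

Lemma unique_cyclic_runs P n :
  0 < n -> periodic P n -> (exists j, P j) -> (exists j, ~~ P j) ->
  (forall i i', i < n -> i' < n -> run_start P n i -> run_start P n i' -> i = i') ->
  unique_cyclic_run P n /\ unique_cyclic_run (fun j => ~~ P j) n.
Proof.
move=> n_gt0 hP exP exNP start_uniq.
split; apply: unique_cyclic_run_of_start => //; first exact: run_start_exists.
  apply: run_start_exists (periodicN hP) exNP _ => //.
  by case: exP => j Pj; exists j; rewrite negbK.
move=> j j'; wlog lt_jj' : j j' / j < j' => [hwlog | lt_jn lt_j'n sj sj'].
  move=> lt_jn lt_j'n sj sj'.
  by case: (ltngtP j j') => [/hwlog | /hwlog | //] hj; [apply: hj | symmetry; apply: hj].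
have [t [t' [lt_tn lt_t'n neq_tt' /andP[st st']]]] :=
  run_starts_interleave n_gt0 (periodicN hP) (i := j) (i' := j') ltac:(lia) sj sj'.
rewrite /run_start !negbK in st st'.
by rewrite (start_uniq t t') ?eqxx in neq_tt'.
Qed.

Lemma cyclic_run_ext P Q n i k : P =1 Q -> cyclic_run P n i k -> cyclic_run Q n i k.
Proof.
move=> eqPQ [lt_in [k_gt0 [lt_kn [run [prev last]]]]].
by do 3 (split=> //); rewrite -!eqPQ; split=> // m /run; rewrite eqPQ.
Qed.

Lemma unique_cyclic_run_ext P Q n :
  P =1 Q -> unique_cyclic_run P n -> unique_cyclic_run Q n.
Proof.
move=> eqPQ [i [k [run uniq]]]; exists i, k; split; first exact: cyclic_run_ext run.
by move=> i' k' /(cyclic_run_ext (fun j => esym (eqPQ j))); apply: uniq.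
Qed.

Lemma cycle_adj_rot n r u v : u < n -> v < n ->
  cycle_adj n ((r + u) %% n) ((r + v) %% n) = cycle_adj n u v.
Proof.
move=> lt_un lt_vn; rewrite /cycle_adj -!(addn1 (_ %% n)) !modnDml !addn1 -!addnS.
by rewrite !eqn_modDl (modn_small lt_un) (modn_small lt_vn).
Qed.

Local Open Scope ring_scope.

Section Plane.
Variable R : realFieldType.
Implicit Types (c d t u x y z : R) (w : point R) (s : segment R).

Definition between x y z : Prop := (x <= z /\ z <= y) \/ (y <= z /\ z <= x).

Lemma betweenE x y z : between x y z <-> (x - z) * (y - z) <= 0.
Proof.
split=> [[] [le1 le2] | h]; first [nra | rewrite /between].
by have [le_xz | lt_zx] := lerP x z; have [le_yz | lt_zy] := lerP y z; nra.
Qed.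

Lemma between_split x y z t : between x y z -> between x t z \/ between t y z.
Proof. rewrite /between; lra. Qed.

Lemma between_convex p q x y z :
  between p q x -> between p q y -> between x y z -> between p q z.
Proof. rewrite /between; lra. Qed.

Lemma betweenN x y z : between (- x) (- y) (- z) <-> between x y z.
Proof. rewrite /between; split; lra. Qed.

Lemma mulr_gt0_sign x y : 0 < x * y -> (0 < x) = (0 < y).
Proof.
case: (ltrgtP 0 x) => [x_gt0 | x_lt0 | <-]; first by rewrite pmulr_rgt0.
  by rewrite nmulr_rgt0 // => y_lt0; rewrite ltNge ltW.
by rewrite mul0r ltxx.
Qed.

Lemma exists_argmax (F : nat -> R) lo hi : (lo <= hi)%N ->
  exists2 m, (lo <= m <= hi)%N & forall j, (lo <= j <= hi)%N -> F j <= F m.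
Proof.
elim: hi => [|hi IH] le_lohi.
  by exists lo => [|j hj]; [lia | have -> : j = lo by lia].
have [le_lohi' | lt_hilo] := leqP lo hi; last first.
  by exists hi.+1 => [|j hj]; [lia | have -> : j = hi.+1 by lia].
have [m hm m_max] := IH le_lohi'.
have split_j j : (lo <= j <= hi.+1)%N -> j = hi.+1 \/ (lo <= j <= hi)%N by lia.
have [le_Fm | lt_Fm] := leP (F hi.+1) (F m).
  by exists m => [|j /split_j [-> | /m_max]]; first lia.
exists hi.+1 => [|j /split_j [-> // | /m_max le_jm]]; first lia.
exact: le_trans le_jm (ltW lt_Fm).
Qed.

Lemma lerp_eq0P (A B : R) :
  (exists t, [/\ 0 <= t, t <= 1 & (1 - t) * A + t * B = 0]) <-> A * B <= 0.
Proof.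
split=> [[t [t_ge0 t_le1 e]] | ].
  have -> : A * B = (A + B) * ((1 - t) * A + t * B) - ((1 - t) * A ^+ 2 + t * B ^+ 2).
    by ring.
  by rewrite e mulr0 sub0r oppr_le0 addr_ge0 // mulr_ge0 ?sqr_ge0 ?subr_ge0.
wlog le_BA : A B / B <= A => [hwlog AB_le0 | AB_le0].
  have [le_BA | /ltW le_AB] := lerP B A; first exact: hwlog.
  have [|t [t_ge0 t_le1 e]] := hwlog B A le_AB; first by rewrite mulrC.
  by exists (1 - t); split; [lra | lra | rewrite -e; ring].
have [eAB | lt_BA] := eqVneq A B.
  have A0 : A = 0 by subst; apply/eqP; rewrite -sqrf_eq0 eq_le sqr_ge0 andbT.
  by exists 0; split=> //; rewrite -eAB A0; ring.
have lt_BA' : B < A by rewrite lt_neqAle eq_sym lt_BA.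
have dAB_gt0 : 0 < A - B by rewrite subr_gt0.
have A_ge0 : 0 <= A.
  rewrite leNgt; apply/negP => A_lt0.
  by move: AB_le0; rewrite leNgt nmulr_rgt0 // (lt_trans lt_BA' A_lt0).
have B_le0 : B <= 0.
  rewrite leNgt; apply/negP => B_gt0.
  by move: AB_le0; rewrite leNgt mulr_gt0 // (lt_trans B_gt0 lt_BA').
exists (A / (A - B)); split.
- by rewrite divr_ge0 // ltW.
- by rewrite ler_pdivrMr // mul1r lerDl oppr_ge0.
- by field; rewrite gt_eqF.
Qed.

Lemma lerp_inj c d t u :
  c != d -> (1 - t) * c + t * d = (1 - u) * c + u * d -> t = u.
Proof.
move=> neq_cd e; have : (t - u) * (d - c) == 0.
  have -> : (t - u) * (d - c) = ((1 - t) * c + t * d) - ((1 - u) * c + u * d) by ring.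
  by rewrite e subrr.
by rewrite mulf_eq0 !subr_eq0 [d == c]eq_sym (negbTE neq_cd) orbF => /eqP.
Qed.

Lemma on_seg_swap w (p q : point R) : on_seg w (p, q) -> on_seg w (q, p).
Proof.
move=> [t [t_ge0 [t_le1 [e1 e2]]]]; exists (1 - t).
by rewrite /= e1 e2; do 2 (split; first lra); split; ring.
Qed.

(* For a segment with an endpoint on the line y = c: [foot c s] is the abscissa of
   that endpoint and [tip c s] the abscissa of the other one. *)
Definition foot c s : R := if s.1.2 == c then s.1.1 else s.2.1.
Definition tip c s : R := if s.1.2 == c then s.2.1 else s.1.1.

Definition level c s : Prop := s.1.2 = c /\ s.2.2 = c.
Definition spans c d s : Prop := (s.1.2 = c /\ s.2.2 = d) \/ (s.1.2 = d /\ s.2.2 = c).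

Lemma on_level_segP c s w :
  level c s -> on_seg w s <-> w.2 = c /\ between (foot c s) (tip c s) w.1.
Proof.
move=> [e1 e2]; rewrite /foot /tip e1 eqxx betweenE -lerp_eq0P.
split=> [[t [t_ge0 [t_le1 [ex ey]]]] | [ey [t [t_ge0 t_le1 e]]]].
  by split; [rewrite ey e1 e2; ring | exists t; split=> //; rewrite ex; ring].
exists t; do 2 (split=> //); split; last by rewrite ey e1 e2; ring.
by rewrite -[LHS]addr0 -e; ring.
Qed.

Lemma level_meetP c s1 s2 : level c s1 -> level c s2 ->
  seg_meet s1 s2 <->
  exists x, between (foot c s1) (tip c s1) x /\ between (foot c s2) (tip c s2) x.
Proof.
move=> lv1 lv2.
split=> [[w [/(on_level_segP _ lv1)[_ b1] /(on_level_segP _ lv2)[_ b2]]] | [x [b1 b2]]].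
  by exists w.1.
by exists (x, c); split; [apply/(on_level_segP _ lv1) | apply/(on_level_segP _ lv2)].
Qed.

Section Spanning.
Variables c d : R.
Hypothesis neq_cd : c != d.

Lemma on_spans_segE s w :
  spans c d s -> on_seg w s <-> on_seg w ((foot c s, c), (tip c s, d)).
Proof.
case: s => [[x1 y1] [x2 y2]]; rewrite /spans /foot /tip /= => -[[-> ->] | [-> ->]].
  by rewrite eqxx.
by rewrite eq_sym (negbTE neq_cd); split; apply: on_seg_swap.
Qed.

Lemma on_spans_seg_base s x : spans c d s -> on_seg (x, c) s <-> x = foot c s.
Proof.
move=> sp; rewrite on_spans_segE //; split=> [[t [t_ge0 [t_le1 [ex ey]]]] | ->].
  rewrite /= in ex ey.
  have t0 : t = 0 by apply: (lerp_inj neq_cd); rewrite -ey; ring.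
  by rewrite ex t0; ring.
by exists 0; do 2 (split=> //); split=> /=; ring.
Qed.

Lemma spans_meetP s1 s2 : spans c d s1 -> spans c d s2 ->
  seg_meet s1 s2 <-> (foot c s1 - foot c s2) * (tip c s1 - tip c s2) <= 0.
Proof.
move=> sp1 sp2; rewrite -lerp_eq0P; split.
  move=> [w [/(on_spans_segE _ sp1) [t [t_ge0 [t_le1 [ex1 ey1]]]]
             /(on_spans_segE _ sp2) [u [_ [_ [ex2 ey2]]]]]].
  have tu : t = u by apply: (lerp_inj neq_cd); rewrite -ey1 -ey2.
  exists t; split=> //.
  have -> : (1 - t) * (foot c s1 - foot c s2) + t * (tip c s1 - tip c s2) =
    ((1 - t) * foot c s1 + t * tip c s1) - ((1 - t) * foot c s2 + t * tip c s2) by ring.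
  by rewrite -ex1 tu -ex2 subrr.
move=> [t [t_ge0 t_le1 e]].
exists ((1 - t) * foot c s1 + t * tip c s1, (1 - t) * c + t * d).
split; apply/on_spans_segE => //; exists t; do 2 (split=> //); split=> //=.
by apply/eqP; rewrite -subr_eq0; apply/eqP; rewrite -e; ring.
Qed.

Lemma level_spans_meetP s1 s2 : level c s1 -> spans c d s2 ->
  seg_meet s1 s2 <-> between (foot c s1) (tip c s1) (foot c s2).
Proof.
move=> lv1 sp2; split=> [[[x y] [/(on_level_segP _ lv1) [/= ey bx]]] | b].
  by rewrite ey => /(on_spans_seg_base _ sp2) ex; rewrite -ex.
exists (foot c s2, c); split; first exact/(on_level_segP _ lv1).
exact/(on_spans_seg_base _ sp2).
Qed.

End Spanning.
End Plane.

(* The segments [0, ..., n-1] of a cyclic IP model with all intervals on one line: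
   if [K t], segment [t] is the interval between [f t] and [g t] on that line,
   otherwise [f t] and [g t] are its feet on the two lines. *)
Record ip_cycle (R : realFieldType) (n : nat) (K : pred nat) (f g : nat -> R)
    (meet : nat -> nat -> Prop) : Prop := IPCycle {
  ip_ivl_meet : forall u v, (u < n)%N -> (v < n)%N -> K u -> K v ->
    meet u v <-> exists x, between (f u) (g u) x /\ between (f v) (g v) x;
  ip_ivl_spans_meet : forall u v, (u < n)%N -> (v < n)%N -> K u -> ~~ K v ->
    meet u v <-> between (f u) (g u) (f v);
  ip_spans_meet : forall u v, (u < n)%N -> (v < n)%N -> ~~ K u -> ~~ K v ->
    meet u v <-> (f u - f v) * (g u - g v) <= 0;
  ip_meet_sym : forall u v, meet u v -> meet v u;
  ip_meet_cycle : forall u v, (u < n)%N -> (v < n)%N -> u != v ->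
    meet u v <-> cycle_adj n u v }.

Section IPCycle.
Variables (R : realFieldType) (n : nat) (K : pred nat) (f g : nat -> R).
Variables (meet : nat -> nat -> Prop).
Hypothesis M : ip_cycle n K f g meet.

Local Notation covers t x := (between (f t) (g t) x).

Lemma meet_succ u : (u.+1 < n)%N -> meet u u.+1.
Proof.
move=> lt_un; apply/(ip_meet_cycle M); rewrite ?(ltnW lt_un) ?neq_ltn ?ltnSn //.
by rewrite /cycle_adj modn_small ?eqxx.
Qed.

Lemma meet_pred u : (0 < u < n)%N -> meet u.-1 u.
Proof. by move=> /andP[u_gt0 lt_un]; have := @meet_succ u.-1; rewrite prednK //; apply. Qed.

Lemma meet_last_first : (1 < n)%N -> meet n.-1 0.
Proof.
move=> lt_1n; apply/(ip_meet_cycle M); rewrite ?prednK ?ltn_predL //; try lia.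
by rewrite /cycle_adj prednK ?modnn // ltnW.
Qed.

Lemma far_not_meet u v :
  (u.+1 < v)%N -> (v < n)%N -> (0 < u)%N \/ (v.+1 < n)%N -> ~ meet u v.
Proof.
move=> lt_u1v lt_vn far /(ip_meet_cycle M) -/(_ ltac:(lia) lt_vn ltac:(lia)).
rewrite /cycle_adj (modn_small (_ : u.+1 < n)%N); last by lia.
have [lt_v1n | le_nv1] := ltnP v.+1 n.
  by rewrite modn_small // => /orP[] /eqP; lia.
by rewrite (_ : v.+1 = n) ?modnn; [move=> /orP[] /eqP | ]; lia.
Qed.

Lemma interval_chain u k x y z :
  (u + k < n)%N -> (forall t, (u <= t <= u + k)%N -> K t) ->
  covers u x -> covers (u + k)%N y -> between x y z ->
  exists2 t, (u <= t <= u + k)%N & covers t z.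
Proof.
elim: k u x => [|k IH] u x lt_n Kt cx cy bz.
  by exists u; [lia | rewrite addn0 in cy; apply: between_convex cx cy bz].
have lt_u1n : (u.+1 < n)%N by lia.
have [w [cw cw']] := (ip_ivl_meet M (ltnW lt_u1n) lt_u1n (Kt u ltac:(lia))
  (Kt u.+1 ltac:(lia))).1 (meet_succ lt_u1n).
case: (between_split w bz) => bz'.
  by exists u; [lia | apply: between_convex cx cw bz'].
have Kt' : forall t, (u.+1 <= t <= u.+1 + k)%N -> K t by move=> t ht; apply: Kt; lia.
rewrite addnS -addSn in cy.
by have [t ht ct] := IH u.+1 w ltac:(lia) Kt' cw' cy bz'; exists t => //; lia.
Qed.

Lemma interval_run_covers l u v r x :
  (l < n)%N -> (u <= v < n)%N -> (r < n)%N -> (forall t, (u <= t <= v)%N -> K t) ->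
  ~~ K l -> ~~ K r -> meet l u -> meet v r -> between (f l) (f r) x ->
  exists2 t, (u <= t <= v)%N & covers t x.
Proof.
move=> lt_ln /andP[le_uv lt_vn] lt_rn Kt Kl Kr m_lu m_vr bx.
have cl : covers u (f l).
  apply: (ip_ivl_spans_meet M _ lt_ln _ Kl).1 (ip_meet_sym M m_lu); first lia.
  by apply: Kt; rewrite leqnn.
have cr : covers (u + (v - u))%N (f r).
  by rewrite subnKC //; apply: (ip_ivl_spans_meet M lt_vn lt_rn _ Kr).1 m_vr; apply: Kt; lia.
have Kt' : forall t, (u <= t <= u + (v - u))%N -> K t by move=> t ht; apply: Kt; lia.
have [t ht ct] := interval_chain (u := u) (k := (v - u)%N) ltac:(lia) Kt' cl cr bx.
by exists t => //; lia.
Qed.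

Lemma spans_apart u v : (u < n)%N -> (v < n)%N -> ~~ K u -> ~~ K v -> ~ meet u v ->
  0 < (f u - f v) * (g u - g v).
Proof.
move=> lt_un lt_vn Ku Kv nm; rewrite ltNge; apply/negP => le0.
exact/nm/(ip_spans_meet M lt_un lt_vn Ku Kv).
Qed.

Section RightOf.
Variable q : nat.
Hypotheses (lt_qn : (q < n)%N) (Kq : ~~ K q).

Definition right_of (t : nat) : Prop :=
  if K t then forall x, covers t x -> f q < x else f q < f t /\ g q < g t.

Lemma ivl_right_of t x y : (t < n)%N -> K t -> ~ meet t q ->
  covers t x -> f q < x -> covers t y -> f q < y.
Proof.
move=> lt_tn Kt nm cx lt_qx cy; rewrite ltNge; apply/negP => le_yq.
apply/nm/(ip_ivl_spans_meet M lt_tn lt_qn Kt Kq).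
by apply: between_convex cx cy _; rewrite /between; lra.
Qed.

Lemma right_of_succ t : (t.+1 < n)%N -> ~ meet t.+1 q -> right_of t -> right_of t.+1.
Proof.
move=> lt_t1n nm; have lt_tn := ltnW lt_t1n; have m_tt1 := meet_succ lt_t1n.
have apart : ~~ K t.+1 -> 0 < (f t.+1 - f q) * (g t.+1 - g q) by move=> Kt1; apply: spans_apart.
rewrite /right_of; case Kt: (K t); case Kt1: (K t.+1) => IH.
- have [x [cx cx1]] := (ip_ivl_meet M lt_tn lt_t1n Kt Kt1).1 m_tt1.
  by move=> y; apply: ivl_right_of nm cx1 (IH x cx).
- have lt_f : f q < f t.+1.
    by apply: IH; apply: (ip_ivl_spans_meet M lt_tn lt_t1n Kt (negbT Kt1)).1.
  by split=> //; rewrite -subr_gt0 -(mulr_gt0_sign (apart (negbT Kt1))) subr_gt0.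
- have cf : covers t.+1 (f t).
    exact: (ip_ivl_spans_meet M lt_t1n lt_tn Kt1 (negbT Kt)).1 (ip_meet_sym M m_tt1).
  by move=> y; apply: ivl_right_of nm cf IH.1.
- have le0 := (ip_spans_meet M lt_tn lt_t1n (negbT Kt) (negbT Kt1)).1 m_tt1.
  have sgn := mulr_gt0_sign (apart (negbT Kt1)); rewrite !subr_gt0 in sgn.
  have [lt_f | le_f] := ltP (f q) (f t.+1); first by rewrite -sgn.
  have le_g : g t.+1 <= g q by rewrite leNgt -sgn ltNge le_f.
  have : 0 < (f t - f t.+1) * (g t - g t.+1) by case: IH => *; rewrite mulr_gt0 // subr_gt0; lra.
  by rewrite ltNge le0.
Qed.

Lemma right_of_upto e m : (m < n)%N -> (forall t, (e < t <= m)%N -> ~ meet t q) ->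
  right_of e -> forall t, (e <= t <= m)%N -> right_of t.
Proof.
move=> lt_mn nm re; elim=> [|t IH] ht; first by have <- : e = 0%N by lia.
have [<- // | lt_et1] : e = t.+1 \/ (e < t.+1)%N by lia.
by apply: right_of_succ; [lia | apply: nm; lia | apply: IH; lia].
Qed.

End RightOf.

Lemma not_all_intervals : (4 <= n)%N -> ~ (forall t, (t < n)%N -> K t).
Proof.
move=> n_ge4 Kall.
have ivl_meet u v : (u < n)%N -> (v < n)%N ->
    meet u v <-> exists x, covers u x /\ covers v x.
  by move=> lt_un lt_vn; apply: (ip_ivl_meet M lt_un lt_vn (Kall u lt_un) (Kall v lt_vn)).
have succ_overlap u : (u.+1 < n)%N -> exists x, covers u x /\ covers u.+1 x.
  by move=> lt_u1n; apply/ivl_meet; [lia | lia | apply: meet_succ].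
have [x0 [c0x0 c1x0]] := succ_overlap 0%N ltac:(lia).
have [x2 [c1x2 c2x2]] := succ_overlap 1%N ltac:(lia).
have [z [c2z c3z]] := succ_overlap 2%N ltac:(lia).
have [y [cny c0y]] := (ivl_meet n.-1 0%N ltac:(lia) ltac:(lia)).1 (meet_last_first ltac:(lia)).
have disj02 w : covers 0%N w -> covers 2%N w -> False.
  move=> c0w c2w; apply: (far_not_meet (u := 0%N) (v := 2%N)); try lia.
  by apply/ivl_meet; [lia | lia | exists w].
have x0_x2 : ~ between x0 y x2.
  by move=> /(between_convex c0x0 c0y) c0x2; apply: disj02 c0x2 c2x2.
have x2_x0 : ~ between z x2 x0.
  by move=> /(between_convex c2z c2x2) c2x0; apply: disj02 c0x0 c2x0.
have neq_x02 : x0 != x2 by apply/eqP => e; apply: (disj02 x2); rewrite // -e.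
have [b | b] : between x0 x2 y \/ between z y x0.
- move: neq_x02; rewrite neq_lt /between in x0_x2 x2_x0 *; case/orP; lra.
- apply: (far_not_meet (u := 1%N) (v := n.-1)); try lia.
  by apply/ivl_meet; [lia | lia | exists y; split=> //; apply: between_convex b].
have cny' : covers (3 + (n.-1 - 3))%N y by rewrite subnKC //; lia.
have [t ht ct] := interval_chain (u := 3%N) (k := (n.-1 - 3)%N) ltac:(lia)
  (fun t ht => Kall t ltac:(lia)) c3z cny' b.
apply: (far_not_meet (u := 1%N) (v := t)); try lia.
by apply/ivl_meet; [lia | lia | exists x0].
Qed.

Lemma no_second_interval_run_left e1 p2 e2 :
  (0 < e1 < p2)%N -> (p2 < e2 < n)%N ->
  (forall t, (t < e1)%N -> K t) -> (forall t, (e1 <= t < p2)%N -> ~~ K t) ->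
  (forall t, (p2 <= t < e2)%N -> K t) -> ~~ K e2 -> ~~ K n.-1 ->
  (forall t, (e1 <= t < p2)%N -> f t < f e2 /\ g t < g e2) -> False.
Proof.
move=> /andP[e1_gt0 lt_e1p2] /andP[lt_p2e2 lt_e2n] KA KC KB Ke2 Kn left.
have [qs qs_in qs_max] := exists_argmax f (lo := e1) (hi := p2.-1) ltac:(lia).
have Kqs : ~~ K qs by apply: KC; lia.
have right_qs : right_of qs n.-1.
  apply: (@right_of_upto qs _ Kqs e2 n.-1); try lia.
  - by move=> t ht /(ip_meet_sym M); apply: far_not_meet; lia.
  - by rewrite /right_of (negbTE Ke2); apply: left; lia.
move: right_qs; rewrite /right_of (negbTE Kn) => -[lt_qs_last _].
have [lt_qs_e2 _] : f qs < f e2 /\ g qs < g e2 by apply: left; lia.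
have [u u_in cu] : exists2 u, (0 <= u <= e1.-1)%N & covers u (f qs).
  apply: (interval_run_covers (l := n.-1) (r := e1)); try lia.
  - by move=> t ht; apply: KA; lia.
  - by apply: KC; lia.
  - by apply: meet_last_first; lia.
  - by apply: meet_pred; lia.
  - by right; split; [apply: qs_max; lia | apply: ltW].
have [v v_in cv] : exists2 v, (p2 <= v <= e2.-1)%N & covers v (f qs).
  apply: (interval_run_covers (l := p2.-1) (r := e2)); try lia.
  - by move=> t ht; apply: KB; lia.
  - by apply: KC; lia.
  - by apply: meet_pred; lia.
  - by apply: meet_pred; lia.
  - by left; split; [apply: qs_max; lia | apply: ltW].
apply: (far_not_meet (u := u) (v := v)); try lia.
by apply/(ip_ivl_meet M); [lia | lia | apply: KA; lia | apply: KB; lia | exists (f qs)].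
Qed.

End IPCycle.

Lemma ip_cycle_opp (R : realFieldType) n K (f g : nat -> R) meet :
  ip_cycle n K f g meet -> ip_cycle n K (fun t => - f t) (fun t => - g t) meet.
Proof.
case=> ivl ivl_sp sp sym cyc; split=> // u v lt_un lt_vn Ku Kv.
- rewrite ivl //; split=> -[x [bu bv]]; exists (- x); first by rewrite !betweenN.
  by rewrite -(betweenN (f u)) -(betweenN (f v)) !opprK.
- by rewrite ivl_sp // betweenN.
- by rewrite sp // -!opprD mulrNN.
Qed.

Lemma no_second_interval_run (R : realFieldType) n K (f g : nat -> R) meet e1 p2 e2 :
  ip_cycle n K f g meet -> (0 < e1 < p2)%N -> (p2 < e2 < n)%N ->
  (forall t, (t < e1)%N -> K t) -> (forall t, (e1 <= t < p2)%N -> ~~ K t) ->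
  (forall t, (p2 <= t < e2)%N -> K t) -> ~~ K e2 -> ~~ K n.-1 -> False.
Proof.
move=> M he1 he2 KA KC KB Ke2 Kn.
have Ke1 : ~~ K e1 by apply: KC; lia.
have apart := spans_apart M (u := e1) (v := e2) ltac:(lia) ltac:(lia) Ke1 Ke2
  (far_not_meet M (u := e1) (v := e2) ltac:(lia) ltac:(lia) ltac:(lia)).
wlog e1_right : f g M apart / f e2 < f e1 => [hwlog|].
  case: (ltrgtP (f e2) (f e1)) => [|lt_e1e2|eq_f]; first exact: hwlog f g M apart.
    apply: (hwlog _ _ (ip_cycle_opp M)); last by rewrite ltrN2.
    by rewrite -!opprD mulrNN.
  by move: apart; rewrite eq_f subrr mul0r ltxx.
have right_e1 : right_of K f g e2 e1.
  rewrite /right_of (negbTE Ke1); split=> //.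
  by rewrite -subr_gt0 -(mulr_gt0_sign apart) subr_gt0.
apply: (no_second_interval_run_left (ip_cycle_opp M) he1 he2 KA KC KB Ke2 Kn) => t ht.
have := right_of_upto M (m := p2.-1) _ Ke2 _ _ right_e1 (t := t).
rewrite /right_of (negbTE (KC t ht)) !ltrN2; apply; try lia.
by move=> j hj; apply: (far_not_meet M (u := j) (v := e2)); lia.
Qed.

Lemma ip_cycle_run_start_unique (R : realFieldType) n K (f g : nat -> R) meet p :
  ip_cycle n K f g meet -> K 0 -> ~~ K n.-1 -> (0 < p < n)%N -> K p -> ~~ K p.-1 -> False.
Proof.
move=> M K0 Kn /andP[p_gt0 lt_pn] Kp Kp1.
have [e1 [/andP[e1_gt0 le_e1] Ke1 KA]] :=
  @first_switch (fun t => ~~ K t) 0 p.-1 (leq0n _) ltac:(by rewrite /= K0) Kp1.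
have [p2 [/andP[lt_e1p2 le_p2] Kp2 KC]] := @first_switch K e1 p ltac:(lia) Ke1 Kp.
have [e2 [/andP[lt_p2e2 le_e2] Ke2 KB]] :=
  @first_switch (fun t => ~~ K t) p2 n.-1 ltac:(lia) ltac:(by rewrite /= Kp2) Kn.
apply: (no_second_interval_run M (e1 := e1) (p2 := p2) (e2 := e2)) => //; try lia.
- by move=> t ht; rewrite -[K t]negbK; apply: KA; lia.
- by move=> t ht; rewrite -[K t]negbK; apply: KB.
Qed.

Section IPSegments.
Variables (R : realFieldType) (a b : R).
Implicit Types (s : segment R).

Lemma perm_segE s :
  a != b -> interval_seg a b s || perm_seg a b s -> perm_seg a b s = ~~ interval_seg a b s.
Proof.
rewrite /interval_seg /perm_seg /on_line => neq_ab.
have neq_ba : (b == a) = false by rewrite eq_sym (negbTE neq_ab).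
case: (eqVneq s.1.2 a) => [-> | ne1]; case: (eqVneq s.2.2 a) => [-> | ne2];
  rewrite ?eqxx ?(negbTE neq_ab) ?neq_ba ?(negbTE ne1) ?(negbTE ne2) ?andbF ?andbT ?orbF //=.
by move=> ->.
Qed.

Lemma IPSEGstar_level_spans n (s : nat -> segment R) :
  IPSEGstar_model a b n s -> exists c d, [/\ c != d,
    forall i, (i < n)%N -> interval_seg a b (s i) -> level c (s i) &
    forall i, (i < n)%N -> ~~ interval_seg a b (s i) -> spans c d (s i)].
Proof.
move=> [[neq_ab s_model] [c [c_ab c_lines]]].
exists c, (if c == a then b else a); split.
- by case: (eqVneq c a) => [-> |].
- by move=> i lt_in /(c_lines i lt_in) /andP[/eqP e1 /eqP e2].
move=> i lt_in Ni; have := s_model i lt_in; rewrite (negbTE Ni) /= /perm_seg /on_line /spans.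
case: (eqVneq c a) c_ab => [-> _ | neq_ca /= /eqP ->].
  by case/orP => /andP[/eqP -> /eqP ->]; [left | right].
by case/orP => /andP[/eqP -> /eqP ->]; [right | left].
Qed.

Section Rotation.
Variables (n : nat) (c d : R) (s : nat -> segment R).
Hypotheses (neq_cd : c != d) (n_gt0 : (0 < n)%N).
Hypothesis ivl_level : forall i, (i < n)%N -> interval_seg a b (s i) -> level c (s i).
Hypothesis perm_spans : forall i, (i < n)%N -> ~~ interval_seg a b (s i) -> spans c d (s i).
Hypothesis s_cycle : represents_cycle n s.

Lemma rotated_ip_cycle r :
  ip_cycle n (fun t => interval_seg a b (s ((r + t) %% n)%N))
    (fun t => foot c (s ((r + t) %% n)%N)) (fun t => tip c (s ((r + t) %% n)%N))
    (fun u v => seg_meet (s ((r + u) %% n)%N) (s ((r + v) %% n)%N)).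
Proof.
have lt_rot t : ((r + t) %% n < n)%N by rewrite ltn_pmod.
split=> u v /=.
- by move=> _ _ Ku Kv; apply: level_meetP; apply: ivl_level.
- by move=> _ _ Ku Kv; apply: (level_spans_meetP neq_cd); [apply: ivl_level | apply: perm_spans].
- by move=> _ _ Ku Kv; apply: (spans_meetP neq_cd); apply: perm_spans.
- by move=> [z [zu zv]]; exists z.
- move=> lt_un lt_vn neq_uv; rewrite -(cycle_adj_rot r lt_un lt_vn).
  by apply: s_cycle; rewrite // eqn_modDl !modn_small.
Qed.

Lemma interval_run_start_unique i i' : (i < n)%N -> (i' < n)%N ->
  run_start (fun j => interval_seg a b (s (j %% n)%N)) n i ->
  run_start (fun j => interval_seg a b (s (j %% n)%N)) n i' -> i = i'.
Proof.
wlog lt_ii' : i i' / (i < i')%N => [hwlog lt_in lt_i'n si si' | lt_in lt_i'n].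
  by case: (ltngtP i i') => [/hwlog | /hwlog | //] h; [apply: h | symmetry; apply: h].
move=> /andP[Pi Pi_prev] /andP[Pi' Pi'_prev]; exfalso.
have hP : periodic (fun j => interval_seg a b (s (j %% n)%N)) n.
  by move=> j; rewrite /= modn_mod.
apply: (ip_cycle_run_start_unique (rotated_ip_cycle i) (p := (i' - i)%N)) => /=.
- by rewrite addn0.
- by rewrite (_ : i + n.-1 = i + n - 1)%N //; lia.
- by apply/andP; split; lia.
- by rewrite subnKC // ltnW.
- rewrite (_ : i + (i' - i).-1 = i'.-1)%N; last by lia.
  by rewrite -(periodic_eq hP (addn_pred_mod n_gt0 (_ : 0 < i')%N)) //; lia.
Qed.

Lemma exists_perm_seg : (4 <= n)%N -> exists j, ~~ interval_seg a b (s (j %% n)%N).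
Proof.
move=> n_ge4.
have [/existsP [j NIj] | /existsPn allI] :=
  boolP [exists j : 'I_n, ~~ interval_seg a b (s (j %% n)%N)].
  by exists j.
case: (not_all_intervals (rotated_ip_cycle 0) n_ge4) => t lt_tn.
by have := allI (Ordinal lt_tn); rewrite negbK /= add0n.
Qed.

End Rotation.
End IPSegments.

Theorem mainTheorem5 (R : realFieldType) (a b : R) (n : nat)
    (s : nat -> segment R) :
  (4 <= n)%N ->
  IPSEGstar_model a b n s ->
  represents_cycle n s ->
  (exists i, (i < n)%N /\ interval_seg a b (s i)) ->
  (exists i k, interval_arc a b n s i k /\
     forall i' k', interval_arc a b n s i' k' -> i' = i /\ k' = k) /\
  (exists i k, perm_arc a b n s i k /\
     forall i' k', perm_arc a b n s i' k' -> i' = i /\ k' = k).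
Proof.
move=> n_ge4 star s_cycle [i0 [lt_i0n Ii0]].
have n_gt0 : (0 < n)%N by lia.
have [[neq_ab s_model] _] := star.
have [c [d [neq_cd ivl_level perm_spans]]] := IPSEGstar_level_spans star.
have hP : periodic (fun j => interval_seg a b (s (j %% n)%N)) n.
  by move=> j; rewrite /= modn_mod.
have exI : exists j, interval_seg a b (s (j %% n)%N) by exists i0; rewrite modn_small.
have [ivl_run perm_run] := unique_cyclic_runs n_gt0 hP exI
  (exists_perm_seg neq_cd n_gt0 ivl_level perm_spans s_cycle n_ge4)
  (interval_run_start_unique neq_cd n_gt0 ivl_level perm_spans s_cycle).
split; first exact: ivl_run.
apply: (unique_cyclic_run_ext (Q := fun j => perm_seg a b (s (j %% n)%N)) _ perm_run) => j.
by rewrite /= perm_segE // s_model // ltn_pmod.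
Qed.
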